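(* Let $r\ge 3$ be a prime power and let $q=r^2$. If there exist Hermitian self-orthogonal linear codes over $\mathbb{F}_q$ with parameters $[m,k_1,d_1]_q$ and $[m,k_2,d_2]_q$, then there exists a Hermitian self-orthogonal linear code over $\mathbb{F}_q$ with parameters $[2m,k_1+k_2,d]_q$ where $d\ge\min\{2d_1,d_2\}$.
   Context: For $a\in\mathbb{F}_q$, $\overline{a}:=a^r$. The Hermitian inner product on $\mathbb{F}_q^n$ is $\langle u,v\rangle_H=\sum_i u_i\overline{v_i}$; a linear code $C$ is Hermitian self-orthogonal if $C\subseteq C^{\perp_H}$, where $C^{\perp_H}$ is its dual under this inner product. A code with parameters $[n,k,d]_q$ is a linear code of length $n$, dimension $k$ and minimum Hamming weight $d$ over $\mathbb{F}_q$. *)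

From HB Require Import structures.
From mathcomp Require Import all_boot all_order all_algebra all_field.
Set Implicit Arguments. Unset Strict Implicit. Unset Printing Implicit Defensive.
Import GRing.Theory.
Local Open Scope ring_scope.

(* Linear codes of length n over F are F-subspaces of the row space 'rV[F]_n. *)

Definition hweight (F : fieldType) (n : nat) (c : 'rV[F]_n) : nat :=
  #|[set i : 'I_n | c 0 i != 0]|.

(* Hermitian inner product <u,v>_H = sum_i u_i * (v_i)^r, conjugation a |-> a^r. *)
Definition herm_inner (F : fieldType) (r n : nat) (u v : 'rV[F]_n) : F :=
  \sum_(i < n) u 0 i * (v 0 i) ^+ r.

Definition herm_self_orth (F : fieldType) (r n : nat) (C : {vspace 'rV[F]_n}) : Prop :=
  forall u v, u \in C -> v \in C -> herm_inner r u v = 0.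

Definition code_params (F : fieldType) (n : nat) (C : {vspace 'rV[F]_n}) (k d : nat) : Prop :=
  [/\ \dim C = k,
      exists2 c, (c \in C) && (c != 0) & hweight c = d
    & forall c, c \in C -> c != 0 -> (d <= hweight c)%N].

Definition prime_power (r : nat) : Prop :=
  exists p e, prime p /\ (0 < e)%N /\ r = (p ^ e)%N.

(* Choose a, b in GF(r^2) with a <> b and 1 + a b^r = 0; then also 1 + b a^r = 0,
   by applying the involution x |-> x^r.  The code
   C = {(u + v | a u + b v) : u in C1, v in C2} has dimension k1 + k2, and in the
   Hermitian product of two of its words the cross terms carry the factors
   1 + a b^r and 1 + b a^r, while the remaining terms vanish since C1 and C2 are
   self-orthogonal.  A word with v = 0 has weight 2 wt(u) >= 2 d1; otherwise, at
   every coordinate where v_i <> 0, u_i + v_i and a u_i + b v_i cannot both vanish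
   because a <> b, so the weight is at least wt(v) >= d2.  Such a pair (a, b)
   exists once r >= 3: the polynomial X^(r+1) + 1 has at most r + 1 < r^2 - 1
   roots, so some b <> 0 has b^(r+1) <> -1, and a := -b^(-r) works. *)
From HB Require Import structures.
From mathcomp Require Import all_boot all_order all_algebra all_field.
From mathcomp Require Import ring zify.
Set Implicit Arguments. Unset Strict Implicit. Unset Printing Implicit Defensive.
Import GRing.Theory.
Local Open Scope ring_scope.

Section HammingWeight.

Variable F : fieldType.

Lemma hweightE n (c : 'rV[F]_n) : hweight c = (\sum_(i < n) (c 0%R i != 0%R))%N.
Proof. by rewrite /hweight -sum1_card big_mkcond; apply: eq_bigr => i _; rewrite inE. Qed.

Lemma hweight_row_mx n (x y : 'rV[F]_n) :
  hweight (row_mx x y) = (hweight x + hweight y)%N.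
Proof.
rewrite !hweightE big_split_ord; congr (_ + _)%N; apply: eq_bigr => i _.
  by rewrite row_mxEl.
by rewrite row_mxEr.
Qed.

Lemma hweightZ n (a : F) (x : 'rV[F]_n) : a != 0 -> hweight (a *: x) = hweight x.
Proof.
by move=> a_neq0; rewrite !hweightE; apply: eq_bigr => i _; rewrite mxE mulf_eq0 (negbTE a_neq0).
Qed.

End HammingWeight.

Section HermitianProduct.

Variables (F : fieldType) (r n : nat).
Hypothesis exprD_r : forall x y : F, (x + y) ^+ r = x ^+ r + y ^+ r.

Lemma herm_inner_row_mx (x y x' y' : 'rV[F]_n) :
  herm_inner r (row_mx x y) (row_mx x' y') = herm_inner r x x' + herm_inner r y y'.
Proof.
rewrite /herm_inner big_split_ord; congr (_ + _); apply: eq_bigr => i _.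
  by rewrite !row_mxEl.
by rewrite !row_mxEr.
Qed.

Lemma herm_innerDl (x y z : 'rV[F]_n) :
  herm_inner r (x + y) z = herm_inner r x z + herm_inner r y z.
Proof. by rewrite /herm_inner -big_split; apply: eq_bigr => i _; rewrite mxE mulrDl. Qed.

Lemma herm_innerZl (c : F) (x z : 'rV[F]_n) :
  herm_inner r (c *: x) z = c * herm_inner r x z.
Proof. by rewrite /herm_inner mulr_sumr; apply: eq_bigr => i _; rewrite mxE mulrA. Qed.

Lemma herm_innerDr (x y z : 'rV[F]_n) :
  herm_inner r x (y + z) = herm_inner r x y + herm_inner r x z.
Proof.
by rewrite /herm_inner -big_split; apply: eq_bigr => i _; rewrite mxE exprD_r mulrDr.
Qed.

Lemma herm_innerZr (c : F) (x z : 'rV[F]_n) :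
  herm_inner r x (c *: z) = c ^+ r * herm_inner r x z.
Proof. by rewrite /herm_inner mulr_sumr; apply: eq_bigr => i _; rewrite mxE exprMn mulrCA. Qed.

End HermitianProduct.

Section TwistedSum.

Variables (F : fieldType) (m : nat).
Implicit Types (a b : F) (u v : 'rV[F]_m).

Definition twist a : 'Hom('rV[F]_m, 'rV[F]_(m + m)) :=
  linfun (mulmxr (row_mx 1%:M a%:M)).

Lemma twistE a u : twist a u = row_mx u (a *: u).
Proof. by rewrite lfunE /= mul_mx_row mulmx1 mul_mx_scalar. Qed.

Lemma twist_eq0 a b u v : a != b -> twist a u = twist b v -> u = 0.
Proof.
move=> neq_ab; rewrite !twistE => /eq_row_mx [<- /eqP].
by rewrite -subr_eq0 -scalerBl scaler_eq0 subr_eq0 (negbTE neq_ab) => /eqP.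
Qed.

Lemma lker_twist a : lker (twist a) == 0%VS.
Proof. by apply/lker0P => u v; rewrite !twistE => /eq_row_mx []. Qed.

Definition twisted_sum a b (C1 C2 : {vspace 'rV[F]_m}) : {vspace 'rV[F]_(m + m)} :=
  (twist a @: C1 + twist b @: C2)%VS.

Lemma memv_twisted_sum a b (C1 C2 : {vspace 'rV[F]_m}) w :
  reflect (exists u v, [/\ u \in C1, v \in C2 & w = row_mx (u + v) (a *: u + b *: v)])
          (w \in twisted_sum a b C1 C2).
Proof.
apply: (iffP memv_addP).
  case=> _ /memv_imgP [u uC1 ->] [_ /memv_imgP [v vC2 ->] ->].
  by exists u, v; rewrite !twistE add_row_mx.
case=> u [v [uC1 vC2 ->]]; exists (twist a u); first exact: memv_img.
by exists (twist b v); [exact: memv_img | rewrite !twistE add_row_mx].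
Qed.

Lemma dim_twisted_sum a b (C1 C2 : {vspace 'rV[F]_m}) :
  a != b -> \dim (twisted_sum a b C1 C2) = (\dim C1 + \dim C2)%N.
Proof.
move=> neq_ab; rewrite dimv_disjoint_sum.
  by rewrite !limg_dim_eq // (eqP (lker_twist _)) capv0.
apply/eqP; rewrite -subv0; apply/subvP => w /memv_capP [/memv_imgP [u _ ->]].
by case/memv_imgP => v _ /(twist_eq0 neq_ab) ->; rewrite linear0 memv0.
Qed.

Lemma herm_inner_twisted r a b u v u' v' :
  (forall x y : F, (x + y) ^+ r = x ^+ r + y ^+ r) ->
  herm_inner r (row_mx (u + v) (a *: u + b *: v)) (row_mx (u' + v') (a *: u' + b *: v'))
  = (1 + a * a ^+ r) * herm_inner r u u' + (1 + b * b ^+ r) * herm_inner r v v'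
    + (1 + a * b ^+ r) * herm_inner r u v' + (1 + b * a ^+ r) * herm_inner r v u'.
Proof.
move=> exprD_r.
rewrite herm_inner_row_mx !(herm_innerDl, herm_innerZl, herm_innerDr exprD_r, herm_innerZr).
ring.
Qed.

Lemma twisted_sum_herm_self_orth r a b (C1 C2 : {vspace 'rV[F]_m}) :
  (forall x y : F, (x + y) ^+ r = x ^+ r + y ^+ r) ->
  1 + a * b ^+ r = 0 -> 1 + b * a ^+ r = 0 ->
  herm_self_orth r C1 -> herm_self_orth r C2 -> herm_self_orth r (twisted_sum a b C1 C2).
Proof.
move=> exprD_r ab_orth ba_orth C1_orth C2_orth w w'.
move=> /memv_twisted_sum [u [v [uC1 vC2 ->]]] /memv_twisted_sum [u' [v' [u'C1 v'C2 ->]]].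
rewrite herm_inner_twisted // ab_orth ba_orth C1_orth // C2_orth //.
by rewrite !mulr0 !mul0r !addr0.
Qed.

Lemma twisted_coord_neq0 a b (x y : F) : a != b ->
  leq (y != 0) (addn (x + y != 0) (a * x + b * y != 0)).
Proof.
move=> neq_ab; have [/eqP|_] := eqVneq (x + y) 0; last by case: (y != 0); case: (_ != 0).
rewrite addr_eq0 => /eqP ->.
by rewrite mulrN addrC -mulrBl mulf_eq0 subr_eq0 [b == a]eq_sym (negbTE neq_ab).
Qed.

Lemma hweight_twisted_ge a b u v : a != b ->
  (hweight v <= hweight (row_mx (u + v) (a *: u + b *: v)))%N.
Proof.
move=> neq_ab; rewrite hweight_row_mx !hweightE -big_split /=.
by apply: leq_sum => i _; rewrite !mxE; apply: twisted_coord_neq0.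
Qed.

Lemma twisted_sum_weight_ge a b (C1 C2 : {vspace 'rV[F]_m}) d1 d2 c :
  a != 0 -> a != b ->
  (forall u, u \in C1 -> u != 0 -> (d1 <= hweight u)%N) ->
  (forall v, v \in C2 -> v != 0 -> (d2 <= hweight v)%N) ->
  c \in twisted_sum a b C1 C2 -> c != 0 -> (minn (2 * d1) d2 <= hweight c)%N.
Proof.
move=> a_neq0 neq_ab C1_wt C2_wt /memv_twisted_sum [u [v [uC1 vC2 ->]]] c_neq0.
have [v0|v_neq0] := eqVneq v 0; last first.
  by rewrite geq_min (leq_trans (C2_wt v vC2 v_neq0)) ?orbT ?hweight_twisted_ge.
move: c_neq0; rewrite v0 scaler0 !addr0 -twistE => c_neq0.
have u_neq0 : u != 0 by apply: contraNneq c_neq0 => ->; rewrite linear0.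
by rewrite twistE hweight_row_mx hweightZ // addnn -mul2n geq_min leq_mul2l C1_wt.
Qed.

End TwistedSum.

Arguments twist {F m} a.

Lemma exists_code_params (F : finFieldType) (n : nat) (C : {vspace 'rV[F]_n}) c :
  c \in C -> c != 0 -> exists d, code_params C (\dim C) d.
Proof.
move=> cC c_neq0.
have has_wt : exists w, [exists x : 'rV[F]_n, [&& x \in C, x != 0 & hweight x == w]].
  by exists (hweight c); apply/existsP; exists c; rewrite cC c_neq0 eqxx.
have [d /existsP [x /and3P [xC x_neq0 /eqP wt_x]] d_min] := ex_minnP has_wt.
exists d; split=> //; first by exists x; rewrite ?xC.
by move=> y yC y_neq0; apply: d_min; apply/existsP; exists y; rewrite yC y_neq0 eqxx.
Qed.

Section QuadraticExtension.

Variables (F : finFieldType) (r : nat).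
Hypothesis cardF : #|F| = (r ^ 2)%N.

Lemma exprD_prime_power : prime_power r -> forall x y : F, (x + y) ^+ r = x ^+ r + y ^+ r.
Proof.
case=> p [e [p_prime [_ r_def]]] x y.
have p_char : p \in [pchar F].
  by apply: (@card_finPcharP _ p (e * 2)); rewrite // cardF r_def expnM.
by apply: exprDn_pchar; rewrite r_def pnatX (pnatE _ p_prime) p_char.
Qed.

Lemma expr_conjK (x : F) : x ^+ r ^+ r = x.
Proof. by rewrite -exprM mulnn -cardF expf_card. Qed.

Lemma exists_norm_neqN1 : (3 <= r)%N -> exists2 b : F, b != 0 & b ^+ r.+1 != -1.
Proof.
move=> r_ge3; apply/exists_inP; apply: contraT; rewrite negb_exists_in => /forall_inP normN1.
pose P : {poly F} := 'X^(r.+1) + 1%:P.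
have P_neq0 : P != 0 by rewrite -size_poly_eq0 size_XnaddC.
have P_roots : all (root P) (enum (predC1 (0 : F))).
  apply/allP => x; rewrite mem_enum => x_neq0.
  by rewrite /root hornerD hornerXn hornerC (eqP (negbNE (normN1 x x_neq0))) addNr.
have := max_poly_roots P_neq0 P_roots (enum_uniq _).
by rewrite size_XnaddC // -cardE cardC1 cardF -mulnn; nia.
Qed.

Lemma exists_herm_pair : prime_power r -> (3 <= r)%N ->
  exists a b : F, [/\ a != 0, a != b, 1 + a * b ^+ r = 0 & 1 + b * a ^+ r = 0].
Proof.
move=> r_pp r_ge3; have [b b_neq0 norm_b] := exists_norm_neqN1 r_ge3.
have br_neq0 : b ^+ r != 0 by rewrite expf_neq0.
have conjN1 : (-1 : F) ^+ r = -1.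
  apply/eqP; rewrite -addr_eq0 -{2}(expr1n F r) -exprD_prime_power // addNr expr0n.
  by rewrite eqn0Ngt (leq_trans _ r_ge3).
exists (- (b ^+ r)^-1), b; split.
- by rewrite oppr_eq0 invr_eq0.
- apply: contra norm_b => /eqP b_def; apply/eqP.
  by rewrite exprS -{1}b_def mulNr mulVf.
- by rewrite mulNr mulVf // addrN.
- by rewrite -mulN1r exprMn conjN1 exprVn expr_conjK mulN1r mulrN mulfV // addrN.
Qed.

End QuadraticExtension.

Theorem corollary4p1 (r : nat) (F : finFieldType)
    (hr : prime_power r) (hr3 : (3 <= r)%N) (hF : #|F| = (r ^ 2)%N)
    (m k1 d1 k2 d2 : nat)
    (C1 C2 : {vspace 'rV[F]_m}) :
  herm_self_orth r C1 -> code_params C1 k1 d1 ->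
  herm_self_orth r C2 -> code_params C2 k2 d2 ->
  exists (C : {vspace 'rV[F]_(2 * m)}) (d : nat),
    [/\ herm_self_orth r C, code_params C (k1 + k2) d
      & (minn (2 * d1) d2 <= d)%N].
Proof.
move=> C1_orth [dimC1 [c1 /andP [c1C1 c1_neq0] _] C1_wt] C2_orth [dimC2 _ C2_wt].
have [a [b [a_neq0 neq_ab ab_orth ba_orth]]] := exists_herm_pair hF hr hr3.
rewrite mul2n -addnn; set C := twisted_sum a b C1 C2.
have twist_c1C : twist a c1 \in C.
  by apply/memv_twisted_sum; exists c1, 0; rewrite twistE scaler0 !addr0 mem0v.
have twist_c1_neq0 : twist a c1 != 0.
  by rewrite -(linear0 (twist a)) (inj_eq (lker0P (lker_twist m a))).
have [d C_params] := exists_code_params twist_c1C twist_c1_neq0.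
exists C, d; split.
- exact: twisted_sum_herm_self_orth (exprD_prime_power hF hr) ab_orth ba_orth C1_orth C2_orth.
- rewrite -dimC1 -dimC2 -(dim_twisted_sum _ _ neq_ab); exact: C_params.
- case: C_params => _ [c /andP [cC c_neq0] <-] _.
  exact: twisted_sum_weight_ge a_neq0 neq_ab C1_wt C2_wt cC c_neq0.
Qed.
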